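(* There exists a block gluing tree-shift that is not strongly irreducible, and there exists a uniformly block gluing tree-shift that is not uniformly strongly irreducible.
   Context: $\Sigma=\{0,1\}$. $\Sigma^*$ is the set of finite words, with $\epsilon$ the empty word. $\Sigma^k$ is the set of words of length $k$, and $\Sigma_n=\bigcup_{0\le k\le n}\Sigma^k$. A tree is $t:\Sigma^*\to\mathcal{A}$ with $\mathcal{A}$ finite, and we write $t_x=t(x)$. A pattern $u$ is a map on a finite prefix-closed support $S(u)$. A tree-shift is $\mathsf{X}_{\mathcal{F}}$, the set of trees in which no pattern of $\mathcal{F}$ occurs at any node. A pattern is accepted by $X$ if it occurs in some $t\in X$. $B_n(X)=\{t|_{\Sigma_{n-1}}:t\in X\}$. For $w\in\Sigma^*$, $t|_{wS(v)}=v$ means $t_{wy}=v_y$ for all $y\in S(v)$. A leaf of $u$ is $w\in S(u)$ with $w0,w1\notin S(u)$. A complete prefix code (CPC) is a finite set $P\subseteq\Sigma^*\setminus\{\epsilon\}$ such that no word of $P$ is a prefix of another, and every $x$ with $|x|\ge\max_{y\in P}|y|$ has a prefix in $P$. Patterns $u,v$ are connected through $P$ if there is $t\in X$ with $t|_{S(u)}=u$ and $t|_{wxS(v)}=v$ for every leaf $w$ of $u$ and every $x\in P$. $X$ is: - block gluing if there is a CPC $P$ such that for every $n\ge1$ any $u,v\in B_n(X)$ are connected through $P$; - uniformly block gluing if this holds with $P=\Sigma^k$ for some $k\ge1$; - strongly irreducible if there is a CPC $P$ through which any two patterns accepted by $X$ are connected; - uniformly strongly irreducible if this holds with $P=\Sigma^k$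 for some $k\ge1$. *)

(* Binary tree-shifts: Sigma = bool (false = 0, true = 1),
   words = seq bool, the empty word is [::], w0 = rcons w false. *)
From mathcomp Require Import all_boot.
Set Implicit Arguments. Unset Strict Implicit. Unset Printing Implicit Defensive.

Definition word := seq bool.

Definition tree (A : finType) := word -> A.

(* A pattern: a finite support (given as a list of words) and labels;
   only the values of [pval] on the support matter. *)
Record pattern (A : finType) := Pattern { supp : seq word; pval : word -> A }.

Definition is_pattern (A : finType) (u : pattern A) : Prop :=
  forall x y : word, (x ++ y) \in supp u -> x \in supp u.

Definition occurs_at (A : finType) (u : pattern A) (t : tree A) (w : word) : Prop :=
  forall y, y \in supp u -> t (w ++ y) = pval u y.

Definition XF (A : finType) (F : pattern A -> Prop) : tree A -> Prop :=
  fun t => forall u w, F u -> ~ occurs_at u t w.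

Definition is_tree_shift (A : finType) (X : tree A -> Prop) : Prop :=
  exists F : pattern A -> Prop,
    (forall u, F u -> is_pattern u) /\ (forall t, X t <-> XF F t).

Definition accepted (A : finType) (X : tree A -> Prop) (u : pattern A) : Prop :=
  exists t, X t /\ occurs_at u t [::].

(* u \in B_n(X) (n >= 1): support Sigma_{n-1} and u = t|_{Sigma_{n-1}} for t in X. *)
Definition in_B (A : finType) (X : tree A -> Prop) (n : nat) (u : pattern A) : Prop :=
  (forall y : word, (y \in supp u) = (size y < n)) /\ accepted X u.

Definition leaf (A : finType) (u : pattern A) (w : word) : Prop :=
  w \in supp u /\ rcons w false \notin supp u /\ rcons w true \notin supp u.

Definition is_CPC (P : seq word) : Prop :=
  (forall x, x \in P -> x != [::]) /\
  (forall x y, x \in P -> y \in P -> prefix x y -> x = y) /\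
  (forall x : word, \max_(y <- P) size y <= size x ->
     exists2 y, y \in P & prefix y x).

Definition connected (A : finType) (X : tree A -> Prop) (P : word -> bool)
    (u v : pattern A) : Prop :=
  exists t, X t /\ occurs_at u t [::] /\
    (forall w x, leaf u w -> P x -> occurs_at v t (w ++ x)).

Definition block_gluing (A : finType) (X : tree A -> Prop) : Prop :=
  exists P : seq word, is_CPC P /\
    forall n, 1 <= n -> forall u v, in_B X n u -> in_B X n v ->
      connected X (fun x => x \in P) u v.

Definition uniformly_block_gluing (A : finType) (X : tree A -> Prop) : Prop :=
  exists k, 1 <= k /\
    forall n, 1 <= n -> forall u v, in_B X n u -> in_B X n v ->
      connected X (fun x : word => size x == k) u v.

Definition strongly_irreducible (A : finType) (X : tree A -> Prop) : Prop :=
  exists P : seq word, is_CPC P /\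
    forall u v, is_pattern u -> is_pattern v -> accepted X u -> accepted X v ->
      connected X (fun x => x \in P) u v.

Definition uniformly_strongly_irreducible (A : finType) (X : tree A -> Prop) : Prop :=
  exists k, 1 <= k /\
    forall u v, is_pattern u -> is_pattern v -> accepted X u -> accepted X v ->
      connected X (fun x : word => size x == k) u v.

(* The example is the shift of trees that are constant on every level.  Two
   blocks of the same height n can be glued by putting the second one at depth
   n, since every leaf of a block lies at depth n - 1; hence gluing through
   Sigma^1 works.  A pattern whose leaves lie at two different depths cannot be
   connected to one that distinguishes a node from its child: the copies of the
   second pattern would assign different letters to nodes of the same level. *)
From mathcomp Require Import all_boot.

Definition level_constant (t : tree bool) : Prop :=
  forall x y : word, size x = size y -> t x = t y.

Fixpoint words_upto (n : nat) : seq word :=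
  if n is n'.+1 then [::] :: [seq b :: w | b <- [:: false; true], w <- words_upto n']
  else [:: [::]].

Lemma mem_words_upto n w : (w \in words_upto n) = (size w <= n).
Proof.
elim: n w => [|n IHn] [|b w] //=.
rewrite in_cons /= mem_cat cats0.
have mem_branch c : (b :: w \in [seq c :: w' | w' <- words_upto n]) = (b == c) && (size w <= n).
  apply/mapP/andP => [[w' w'_in [-> ->]]|[/eqP -> w_le]]; first by rewrite -IHn.
  by exists w; rewrite ?IHn.
by rewrite !mem_branch {mem_branch}; case: b; rewrite ?andbF ?orbF.
Qed.

Definition level_clash (u : pattern bool) : Prop :=
  is_pattern u /\ exists x y, [/\ x \in supp u, y \in supp u, size x = size y & pval u x <> pval u y].

Lemma level_constant_tree_shift : is_tree_shift level_constant.
Proof.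
exists level_clash; split=> [u []//|t]; split.
- move=> t_lc u w [_ [x [y [x_in y_in sxy neq_xy]]]] occ.
  by apply: neq_xy; rewrite -(occ x x_in) -(occ y y_in); apply: t_lc; rewrite !size_cat sxy.
- move=> t_XF x y sxy; case: (eqVneq (t x) (t y)) => // neq_xy.
  case: (t_XF (Pattern (words_upto (size x)) t) [::]) => [|z _//].
  split=> [a b|] /=; first by rewrite !mem_words_upto size_cat; apply: leq_trans; apply: leq_addr.
  by exists x, y; rewrite !mem_words_upto sxy leqnn; split=> //; apply/eqP.
Qed.

Lemma is_pattern_of_prefixes (A : finType) (u : pattern A) :
  all (fun z => all (fun i => take i z \in supp u) (iota 0 (size z).+1)) (supp u) ->
  is_pattern u.
Proof.
move=> /allP prefixes_in x y xy_in.
have /allP := prefixes_in _ xy_in; move/(_ (size x)); rewrite take_size_cat //; apply.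
by rewrite mem_iota /= size_cat ltnS leq_addr.
Qed.

(* Leaves at depths 1 and 2. *)
Definition unbalanced_block : pattern bool :=
  Pattern [:: [::]; [:: false]; [:: true]; [:: false; false]; [:: false; true]] (fun _ => false).

Definition root_differs_from_child : pattern bool :=
  Pattern [:: [::]; [:: false]] (fun w => w != [::]).

Lemma unbalanced_block_pattern : is_pattern unbalanced_block.
Proof. exact: is_pattern_of_prefixes. Qed.

Lemma root_differs_from_child_pattern : is_pattern root_differs_from_child.
Proof. exact: is_pattern_of_prefixes. Qed.

Lemma unbalanced_block_accepted : accepted level_constant unbalanced_block.
Proof. by exists (fun _ => false). Qed.

Lemma root_differs_from_child_accepted : accepted level_constant root_differs_from_child.
Proof.
exists (fun w => size w != 0); split=> [x y -> //|y].
by rewrite !inE => /orP[] /eqP->.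
Qed.

Lemma level_constant_not_connected (P : word -> bool) y : P y ->
  ~ connected level_constant P unbalanced_block root_differs_from_child.
Proof.
move=> Py [t [t_lc [_ glued]]].
have leaf_t : leaf unbalanced_block [:: true] by [].
have leaf_ff : leaf unbalanced_block [:: false; false] by [].
have := glued _ _ leaf_t Py [:: false] isT.
have := glued _ _ leaf_ff Py [::] isT.
rewrite /= cats0 => t_ffy t_tyf.
have : t (true :: y ++ [:: false]) = t [:: false, false & y].
  by apply: t_lc; rewrite /= size_cat addn1.
by rewrite t_tyf t_ffy.
Qed.

Lemma level_constant_glue_blocks (P : word -> bool) :
  (forall x, P x -> size x = 1) ->
  forall n, 1 <= n -> forall u v, in_B level_constant n u -> in_B level_constant n v ->
  connected level_constant P u v.
Proof.
move=> P_depth1 n n_gt0 u v [supp_u [t1 [t1_lc t1_u]]] [supp_v [t2 [t2_lc t2_v]]].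
exists (fun z => if size z < n then t1 z else t2 (drop n z)); split; [|split].
- move=> x y sxy; rewrite sxy; case: ifP => _; first exact: t1_lc.
  by apply: t2_lc; rewrite !size_drop sxy.
- by move=> y y_in; move: (y_in); rewrite supp_u => ->; apply: t1_u.
- move=> w x [w_in [w0_notin _]] /P_depth1 sx y y_in.
  move: w_in w0_notin; rewrite !supp_u size_rcons -leqNgt => sw_lt sw_ge.
  have swx : size (w ++ x) = n by rewrite size_cat sx addn1; apply/eqP; rewrite eqn_leq sw_lt.
  by rewrite size_cat swx ltnNge leq_addr /= -swx drop_size_cat //; apply: t2_v.
Qed.

Lemma first_level_CPC : is_CPC [:: [:: false]; [:: true]].
Proof.
split; [|split].
- by move=> x; rewrite !inE => /orP[] /eqP->.
- by move=> x y; rewrite !inE => /orP[] /eqP-> /orP[] /eqP->.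
- case=> [|b x]; first by rewrite !big_cons big_nil.
  move=> _.
  by exists [:: b]; [case: b | rewrite prefix_cons eqxx prefix0s].
Qed.

Lemma CPC_nonempty (P : seq word) : is_CPC P -> exists y, y \in P.
Proof.
move=> [_ [_ covers]].
have [y y_in _] := covers (nseq (\max_(y <- P) size y) false) (eq_leq (esym (size_nseq _ _))).
by exists y.
Qed.

Lemma level_constant_block_gluing : block_gluing level_constant.
Proof.
exists [:: [:: false]; [:: true]]; split; first exact: first_level_CPC.
by apply: level_constant_glue_blocks => x; rewrite !inE => /orP[] /eqP->.
Qed.

Lemma level_constant_uniformly_block_gluing : uniformly_block_gluing level_constant.
Proof. by exists 1; split=> //; apply: level_constant_glue_blocks => x /eqP. Qed.

Lemma level_constant_not_strongly_irreducible : ~ strongly_irreducible level_constant.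
Proof.
move=> [P [/CPC_nonempty [y Py] conn]].
apply: (@level_constant_not_connected (fun x => x \in P) y Py).
exact: conn unbalanced_block_pattern root_differs_from_child_pattern
  unbalanced_block_accepted root_differs_from_child_accepted.
Qed.

Lemma level_constant_not_uniformly_strongly_irreducible :
  ~ uniformly_strongly_irreducible level_constant.
Proof.
move=> [k [_ conn]].
apply: (@level_constant_not_connected (fun x : word => size x == k) (nseq k false)).
  by rewrite size_nseq.
exact: conn unbalanced_block_pattern root_differs_from_child_pattern
  unbalanced_block_accepted root_differs_from_child_accepted.
Qed.

Theorem corollary3p11 :
  (exists (A : finType) (X : tree A -> Prop),
      is_tree_shift X /\ block_gluing X /\ ~ strongly_irreducible X) /\
  (exists (A : finType) (X : tree A -> Prop),
      is_tree_shift X /\ uniformly_block_gluing X /\ ~ uniformly_strongly_irreducible X).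
Proof.
split; exists bool, level_constant; split; try exact: level_constant_tree_shift.
- exact: conj level_constant_block_gluing level_constant_not_strongly_irreducible.
- exact: conj level_constant_uniformly_block_gluing
    level_constant_not_uniformly_strongly_irreducible.
Qed.
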